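(* Let $\Gamma$ be a group, $S$ a $\Gamma$-graded semigroup with local units, and $S_\Gamma$ the corresponding stable graded Rees matrix semigroup. Then: (1) $E(S_\Gamma)=\{e_{\alpha\alpha}(u):u\in E(S),\alpha\in\Gamma\}$; (2) $S_\Gamma$ has local units; (3) $S_\Gamma$ is strongly graded; (4) the map $\phi:S\#\Gamma\to(S_\Gamma)_\varepsilon$ with $\phi(sP_\alpha)=e_{\deg(s)\alpha,\alpha}(s)$ for $sP_\alpha\neq0$ and $\phi(0)=0$ is a semigroup isomorphism; (5) $S$ is an inverse semigroup if and only if $S_\Gamma$ is an inverse semigroup.
   Context: Semigroups have a zero; $S$ is $\Gamma$-graded via $\deg:S\setminus\{0\}\to\Gamma$ with $\deg(st)=\deg(s)\deg(t)$ whenever $st\neq0$; $S_\alpha=\deg^{-1}(\alpha)\cup\{0\}$; strongly graded means $S_\alpha S_\beta=S_{\alpha\beta}$; local units: each $s$ has idempotents $u,v$ with $us=s=sv$; $E(\cdot)$ denotes idempotents. $S_\Gamma=\{e_{\alpha\beta}(s):\alpha,\beta\in\Gamma,s\in S\}$, where all $e_{\alpha\beta}(0)$ are identified with a single zero $0$, with multiplication $e_{\alpha\beta}(s)e_{\delta\gamma}(t)=e_{\alpha\gamma}(st)$ if $\beta=\delta$ and $0$ otherwise, and $\Gamma$-grading $\deg(e_{\alpha\beta}(s))=\alpha^{-1}\deg(s)\beta$ for nonzero elements. The smash product $S\#\Gamma=\{sP_\alpha:s\in S\setminus\{0\},\alpha\in\Gamma\}\cup\{0\}$ has product $(sP_\alpha)(tP_\beta)=stP_\beta$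 if $st\neq0$ and $t\in S_{\alpha\beta^{-1}}$, else $0$. *)

From Stdlib Require Import ClassicalEpsilon.


Definition dec (P : Prop) : {P} + {~ P} := excluded_middle_informative P.

Definition sg0 {T : Type} (mul : T -> T -> T) (z : T) : Prop :=
  (forall x y w, mul x (mul y w) = mul (mul x y) w) /\
  (forall x, mul z x = z) /\ (forall x, mul x z = z).

Definition is_group {G : Type} (op : G -> G -> G) (e : G) (inv : G -> G) : Prop :=
  (forall x y w, op x (op y w) = op (op x y) w) /\
  (forall x, op e x = x /\ op x e = x) /\
  (forall x, op (inv x) x = e /\ op x (inv x) = e).

Definition idempotent {T : Type} (mul : T -> T -> T) (x : T) : Prop := mul x x = x.

Definition has_local_units {T : Type} (mul : T -> T -> T) : Prop :=
  forall s, exists u v, idempotent mul u /\ idempotent mul v /\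
                        mul u s = s /\ mul s v = s.

(* Gamma-grading: deg is only meaningful on nonzero elements;
   deg (st) = deg s deg t whenever st <> 0 *)
Definition graded {T G : Type} (mul : T -> T -> T) (z : T) (op : G -> G -> G)
  (deg : T -> G) : Prop :=
  forall s t, mul s t <> z -> deg (mul s t) = op (deg s) (deg t).

Definition component {T G : Type} (z : T) (deg : T -> G) (a : G) (x : T) : Prop :=
  x = z \/ (x <> z /\ deg x = a).

Definition strongly_graded {T G : Type} (mul : T -> T -> T) (z : T)
  (op : G -> G -> G) (deg : T -> G) : Prop :=
  forall a b x, component z deg (op a b) x <->
    exists y w, component z deg a y /\ component z deg b w /\ x = mul y w.

Definition inverse_semigroup {T : Type} (mul : T -> T -> T) : Prop :=
  forall s, exists! t, mul (mul s t) s = s /\ mul (mul t s) t = t.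

Definition nz {S : Type} (z : S) := {s : S | s <> z}.

(* Stable graded Rees matrix semigroup S_Gamma: None is the zero,
   Some (a, b, s) is e_{ab}(s) with s <> 0. *)
Arguments nz {S} z.
Definition SGam (G S : Type) (z : S) : Type := option (G * G * nz z).

(* e_{ab}(s), with all e_{ab}(0) identified with the zero *)
Definition eRees {G S : Type} (z : S) (a b : G) (s : S) : SGam G S z :=
  match dec (s = z) with
  | left _ => None
  | right h => Some (a, b, exist _ s h)
  end.

Definition rees_mul {G S : Type} (mul : S -> S -> S) (z : S)
  (x y : SGam G S z) : SGam G S z :=
  match x, y with
  | Some (a, b, s), Some (d, c, t) =>
      if dec (b = d) then eRees z a c (mul (proj1_sig s) (proj1_sig t)) else None
  | _, _ => None
  end.

(* deg (e_{ab}(s)) = a^{-1} deg(s) b on nonzero elements (value e on 0 irrelevant) *)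
Definition rees_deg {G S : Type} (op : G -> G -> G) (e : G) (inv : G -> G)
  (deg : S -> G) (z : S) (x : SGam G S z) : G :=
  match x with
  | Some (a, b, s) => op (op (inv a) (deg (proj1_sig s))) b
  | None => e
  end.

(* Smash product S # Gamma: None is 0, Some (s, a) is s P_a with s <> 0 *)
Definition Smash (G S : Type) (z : S) : Type := option (nz z * G).

Definition smash_mul {G S : Type} (mul : S -> S -> S) (z : S)
  (op : G -> G -> G) (inv : G -> G) (deg : S -> G)
  (x y : Smash G S z) : Smash G S z :=
  match x, y with
  | Some (s, a), Some (t, b) =>
      match dec (mul (proj1_sig s) (proj1_sig t) = z) with
      | left _ => None
      | right h =>
          if dec (deg (proj1_sig t) = op a (inv b))
          then Some (exist _ (mul (proj1_sig s) (proj1_sig t)) h, b)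
          else None
      end
  | _, _ => None
  end.

Definition phi {G S : Type} (z : S) (op : G -> G -> G) (deg : S -> G)
  (x : Smash G S z) : SGam G S z :=
  match x with
  | Some (s, a) => eRees z (op (deg (proj1_sig s)) a) a (proj1_sig s)
  | None => None
  end.

From Stdlib Require Import Classical ProofIrrelevance.

(* The elements e_{ab}(s) of S_Gamma multiply like matrix units:
   e_{ab}(s) e_{bc}(t) = e_{ac}(st), and mismatched indices give 0.  Hence
   idempotents live on the diagonal, local units of s give local units of
   e_{ab}(s), and the inverse of e_{ab}(s) is e_{ba}(t) for the inverse t of s.
   For strong grading, an element e_{cd}(s) of degree ab factors as
   e_{cg}(s) e_{gd}(v), with v a right local unit of s and
   g = deg(s)^-1 c a chosen so that the first factor has degree a; the second
   then has degree b because nonzero idempotents have degree 1.  The smash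
   product embeds as the degree-1 component, s P_a going to the unique
   element e_{ca}(s) of degree 1, c = deg(s) a. *)

Lemma dec_refl {A B : Type} (a : A) (x y : B) :
  (if dec (a = a) then x else y) = x.
Proof. destruct (dec (a = a)) as [_|n]; [reflexivity|contradiction]. Qed.

Lemma dec_neq {A B : Type} (a b : A) (x y : B) :
  a <> b -> (if dec (a = b) then x else y) = y.
Proof. intros n. destruct (dec (a = b)); [contradiction|reflexivity]. Qed.

Section ReesMatrix.
Context {G S : Type} {mul : S -> S -> S} {z : S}.
Hypothesis HS : sg0 mul z.

Local Notation rmul := (@rees_mul G S mul z).

Lemma mul0s s : mul z s = z. Proof. apply HS. Qed.
Lemma muls0 s : mul s z = z. Proof. apply HS. Qed.

Lemma eRees0 (a b : G) : eRees z a b z = None.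
Proof. unfold eRees. destruct (dec (z = z)); [reflexivity|contradiction]. Qed.

Lemma eRees_nz (a b : G) s (hs : s <> z) : eRees z a b s = Some (a, b, exist _ s hs).
Proof.
  unfold eRees. destruct (dec (s = z)) as [E|n]; [contradiction|].
  do 3 f_equal. apply proof_irrelevance.
Qed.

Lemma eRees_neq0 (a b : G) s : s <> z -> eRees z a b s <> None.
Proof. intros hs. rewrite (eRees_nz a b s hs). discriminate. Qed.

Lemma SGamP (x : SGam G S z) :
  x = None \/ exists a b s, s <> z /\ x = eRees z a b s.
Proof.
  destruct x as [[[a b] [s hs]]|]; [right|left; reflexivity].
  exists a, b, s. split; [exact hs|]. symmetry. apply eRees_nz.
Qed.

Lemma eRees_inj (a b a' b' : G) s s' :
  s <> z -> eRees z a b s = eRees z a' b' s' -> a = a' /\ b = b' /\ s = s'.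
Proof.
  intros hs E. destruct (classic (s' = z)) as [->|hs'].
  - rewrite eRees0 in E. now apply eRees_neq0 in E.
  - rewrite (eRees_nz a b s hs), (eRees_nz a' b' s' hs') in E.
    now injection E.
Qed.

Lemma rees_mul0x (x : SGam G S z) : rmul None x = None.
Proof. reflexivity. Qed.

Lemma rees_mulx0 (x : SGam G S z) : rmul x None = None.
Proof. destruct x as [[[? ?] ?]|]; reflexivity. Qed.

Lemma rees_mul_eRees (a b d c : G) s t :
  rmul (eRees z a b s) (eRees z d c t) =
  if dec (b = d) then eRees z a c (mul s t) else None.
Proof.
  destruct (classic (s = z)) as [->|hs].
  - rewrite eRees0, rees_mul0x, mul0s, eRees0. now destruct dec.
  - destruct (classic (t = z)) as [->|ht].
    + rewrite eRees0, rees_mulx0, muls0, eRees0. now destruct dec.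
    + now rewrite (eRees_nz a b s hs), (eRees_nz d c t ht).
Qed.

Lemma rees_mul_match (a b c : G) s t :
  rmul (eRees z a b s) (eRees z b c t) = eRees z a c (mul s t).
Proof. now rewrite rees_mul_eRees, dec_refl. Qed.

Lemma rees_mul_mismatch (a b d c : G) s t :
  b <> d -> rmul (eRees z a b s) (eRees z d c t) = None.
Proof. intros n. now rewrite rees_mul_eRees, dec_neq. Qed.

Lemma rees_idempotentP (a0 : G) (x : SGam G S z) :
  idempotent rmul x <-> exists u (a : G), idempotent mul u /\ x = eRees z a a u.
Proof.
  unfold idempotent. split.
  - intros Hx. destruct (SGamP x) as [->|[a [b [s [hs ->]]]]].
    + exists z, a0. split; [apply mul0s|]. symmetry. apply eRees0.
    + destruct (classic (b = a)) as [->|n].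
      * rewrite rees_mul_match in Hx. symmetry in Hx.
        destruct (eRees_inj _ _ _ _ _ _ hs Hx) as [_ [_ Hs]].
        exists s, a. auto.
      * rewrite rees_mul_mismatch in Hx by exact n.
        symmetry in Hx. now apply eRees_neq0 in Hx.
  - intros [u [a [Hu ->]]]. now rewrite rees_mul_match, Hu.
Qed.

Lemma rees_local_units : has_local_units mul -> has_local_units rmul.
Proof.
  intros Hlu x. unfold idempotent.
  destruct (SGamP x) as [->|[a [b [s [_ ->]]]]].
  - exists None, None. auto.
  - destruct (Hlu s) as [u [v [Hu [Hv [Hus Hsv]]]]].
    exists (eRees z a a u), (eRees z b b v).
    now rewrite !rees_mul_match, Hu, Hv, Hus, Hsv.
Qed.

Definition inverse_pair {T : Type} (m : T -> T -> T) (s t : T) : Prop :=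
  m (m s t) s = s /\ m (m t s) t = t.

Lemma inverse_pair_eRees (a b : G) s t :
  inverse_pair mul s t -> inverse_pair rmul (eRees z a b s) (eRees z b a t).
Proof. intros [H1 H2]. split; now rewrite !rees_mul_match, ?H1, ?H2. Qed.

Lemma inverse_pair_eReesP (a b : G) s y : s <> z ->
  inverse_pair rmul (eRees z a b s) y ->
  exists t, t <> z /\ y = eRees z b a t /\ inverse_pair mul s t.
Proof.
  intros hs [Y1 Y2].
  destruct (SGamP y) as [->|[c [d [t [ht ->]]]]].
  - rewrite rees_mulx0 in Y1. symmetry in Y1. now apply eRees_neq0 in Y1.
  - destruct (classic (b = c)) as [<-|n];
      [|rewrite rees_mul_mismatch in Y1 by exact n; symmetry in Y1;
        now apply eRees_neq0 in Y1].
    destruct (classic (d = a)) as [->|n];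
      [|rewrite rees_mul_match, rees_mul_mismatch in Y1 by exact n;
        symmetry in Y1; now apply eRees_neq0 in Y1].
    rewrite !rees_mul_match in Y1, Y2. symmetry in Y1, Y2.
    destruct (eRees_inj _ _ _ _ _ _ hs Y1) as [_ [_ T1]].
    destruct (eRees_inj _ _ _ _ _ _ ht Y2) as [_ [_ T2]].
    exists t. repeat split; auto.
Qed.

Lemma inverse_pair0 {T : Type} (m : T -> T -> T) (o : T) :
  (forall x, m o x = o) -> (forall x, m x o = o) ->
  forall t, inverse_pair m o t <-> t = o.
Proof.
  intros Hl Hr t. unfold inverse_pair. split.
  - intros [_ H]. now rewrite Hr, Hl in H.
  - intros ->. now rewrite Hl.
Qed.

Lemma inverse_semigroup_rees :
  inverse_semigroup mul -> inverse_semigroup rmul.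
Proof.
  intros Hinv x. destruct (SGamP x) as [->|[a [b [s [hs ->]]]]].
  - exists None. split; [now apply (inverse_pair0 rmul None rees_mul0x rees_mulx0)|].
    intros y Hy. symmetry. now apply (inverse_pair0 rmul None rees_mul0x rees_mulx0).
  - destruct (Hinv s) as [t [Hst Ht]].
    exists (eRees z b a t). split; [now apply inverse_pair_eRees|].
    intros y Hy.
    destruct (inverse_pair_eReesP a b s y hs Hy) as [t' [_ [-> Ht']]].
    now rewrite (Ht t' Ht').
Qed.

Lemma inverse_semigroup_of_rees (a : G) :
  inverse_semigroup rmul -> inverse_semigroup mul.
Proof.
  intros Hinv s. destruct (classic (s = z)) as [->|hs].
  - exists z. split; [now apply (inverse_pair0 mul z mul0s muls0)|].
    intros t Ht. symmetry. now apply (inverse_pair0 mul z mul0s muls0).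
  - destruct (Hinv (eRees z a a s)) as [y [Hy Huniq]].
    destruct (inverse_pair_eReesP a a s y hs Hy) as [t [ht [-> Hst]]].
    exists t. split; [exact Hst|].
    intros t' Hst'.
    specialize (Huniq _ (inverse_pair_eRees a a s t' Hst')).
    now destruct (eRees_inj _ _ _ _ _ _ ht Huniq) as [_ [_ ->]].
Qed.

End ReesMatrix.

Section Group.
Context {G : Type} {op : G -> G -> G} {e : G} {inv : G -> G}.
Hypothesis HG : is_group op e inv.

Lemma mulgA x y w : op (op x y) w = op x (op y w).
Proof. symmetry. apply HG. Qed.
Lemma mul1g x : op e x = x. Proof. apply HG. Qed.
Lemma mulg1 x : op x e = x. Proof. apply HG. Qed.
Lemma mulVg x : op (inv x) x = e. Proof. apply HG. Qed.
Lemma mulgV x : op x (inv x) = e. Proof. apply HG. Qed.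

Lemma mulKg x y : op (inv x) (op x y) = y.
Proof. now rewrite <- mulgA, mulVg, mul1g. Qed.
Lemma mulKVg x y : op x (op (inv x) y) = y.
Proof. now rewrite <- mulgA, mulgV, mul1g. Qed.

Lemma invg_unique x y : op x y = e -> y = inv x.
Proof. intros H. now rewrite <- (mulKg x y), H, mulg1. Qed.
Lemma invgM x y : inv (op x y) = op (inv y) (inv x).
Proof. symmetry. apply invg_unique. now rewrite mulgA, mulKVg, mulgV. Qed.
Lemma invgK x : inv (inv x) = x.
Proof. symmetry. apply invg_unique, mulVg. Qed.

Lemma eq_mulgV x a b : x = op a (inv b) <-> a = op x b.
Proof.
  split; intros ->; rewrite mulgA; [now rewrite mulVg, mulg1|now rewrite mulgV, mulg1].
Qed.

Lemma mulg_idemp x : op x x = x -> x = e.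
Proof. intros H. now rewrite <- (mulKg x x), H, mulVg. Qed.

End Group.

Section GradedRees.
Context {G : Type} {op : G -> G -> G} {e : G} {inv : G -> G}.
Context {S : Type} {mul : S -> S -> S} {z : S} {deg : S -> G}.
Hypotheses (HG : is_group op e inv) (HS : sg0 mul z) (Hdeg : graded mul z op deg).

Local Notation rmul := (@rees_mul G S mul z).
Local Notation rdeg := (rees_deg op e inv deg z).
Local Notation rcomp := (component None rdeg).

Ltac gsimpl := repeat progress rewrite ?(mulgA HG), ?(invgM HG), ?(invgK HG),
  ?(mulKg HG), ?(mulKVg HG), ?(mulVg HG), ?(mulgV HG), ?(mul1g HG), ?(mulg1 HG).

Lemma rees_deg_eRees (a b : G) s :
  s <> z -> rdeg (eRees z a b s) = op (op (inv a) (deg s)) b.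
Proof. intros hs. now rewrite (eRees_nz a b s hs). Qed.

Lemma deg_idempotent v : idempotent mul v -> v <> z -> deg v = e.
Proof.
  intros Hv hv. apply (mulg_idemp HG).
  rewrite <- (Hdeg v v); rewrite Hv; [reflexivity|exact hv].
Qed.

Lemma rees_componentP (a : G) x :
  rcomp a x <->
  x = None \/ exists c d s, s <> z /\ x = eRees z c d s /\ op (op (inv c) (deg s)) d = a.
Proof.
  split.
  - intros [->|[hx Hx]]; [now left|right].
    destruct (SGamP x) as [->|[c [d [s [hs ->]]]]]; [contradiction|].
    exists c, d, s. rewrite (rees_deg_eRees c d s hs) in Hx. auto.
  - intros [->|[c [d [s [hs [-> Hx]]]]]]; [now left|right].
    split; [now apply eRees_neq0|]. now rewrite rees_deg_eRees.
Qed.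

Lemma rees_component_mul (a b : G) y w :
  rcomp a y -> rcomp b w -> rcomp (op a b) (rmul y w).
Proof.
  rewrite !rees_componentP.
  intros [->|[c [g [s [hs [-> Hy]]]]]]; [now left|].
  intros [->|[g' [d [t [ht [-> Hw]]]]]]; [left; apply rees_mulx0|].
  destruct (classic (g = g')) as [<-|n]; [|left; now apply rees_mul_mismatch].
  rewrite (rees_mul_match HS).
  destruct (classic (mul s t = z)) as [E|E]; [left; rewrite E; apply eRees0|right].
  exists c, d, (mul s t). repeat split; [exact E|].
  rewrite (Hdeg s t E), <- Hy, <- Hw. now gsimpl.
Qed.

Lemma rees_component_factor (Hlu : has_local_units mul) (a b : G) x :
  rcomp (op a b) x -> exists y w, rcomp a y /\ rcomp b w /\ x = rmul y w.
Proof.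
  rewrite rees_componentP.
  intros [->|[c [d [s [hs [-> Hx]]]]]].
  - exists None, None. rewrite !rees_componentP. auto.
  - destruct (Hlu s) as [u [v [_ [Hv [_ Hsv]]]]].
    assert (hv : v <> z) by (intros ->; apply hs; now rewrite <- Hsv, muls0).
    pose (g := op (op (inv (deg s)) c) a).
    exists (eRees z c g s), (eRees z g d v).
    rewrite !rees_componentP, (rees_mul_match HS), Hsv.
    repeat split; right.
    + exists c, g, s. repeat split; [exact hs|]. unfold g. now gsimpl.
    + exists g, d, v. repeat split; [exact hv|].
      rewrite (deg_idempotent v Hv hv). unfold g.
      rewrite <- (mulKg HG a b), <- Hx. now gsimpl.
Qed.

Lemma rees_strongly_graded :
  has_local_units mul -> strongly_graded rmul None op rdeg.
Proof.
  intros Hlu a b x. split; [now apply rees_component_factor|].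
  intros [y [w [Hy [Hw ->]]]]. now apply rees_component_mul.
Qed.

Local Notation phi := (phi z op deg).
Local Notation smul := (smash_mul mul z op inv deg).

Lemma phi_component1 x : rcomp e (phi x).
Proof.
  apply rees_componentP. destruct x as [[[s hs] a]|]; [right|now left].
  exists (op (deg s) a), a, s. repeat split; [exact hs|]. now gsimpl.
Qed.

Lemma phi_mul x y : phi (smul x y) = rmul (phi x) (phi y).
Proof.
  destruct x as [[[s hs] a]|]; [|reflexivity].
  destruct y as [[[t ht] b]|]; [|symmetry; apply rees_mulx0].
  simpl. rewrite (rees_mul_eRees HS).
  destruct (dec (mul s t = z)) as [E|E].
  - rewrite E, eRees0. now destruct dec.
  - destruct (dec (deg t = op a (inv b))) as [D|D];
      destruct (dec (a = op (deg t) b)) as [D'|D']; simpl.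
    + now rewrite (Hdeg s t E), D', (mulgA HG).
    + exfalso. now apply D', (eq_mulgV HG).
    + exfalso. now apply D, (eq_mulgV HG).
    + reflexivity.
Qed.

Lemma phi_inj x y : phi x = phi y -> x = y.
Proof.
  destruct x as [[[s hs] a]|], y as [[[t ht] b]|]; simpl; intros E.
  - destruct (eRees_inj _ _ _ _ _ _ hs E) as [_ [-> ->]].
    do 3 f_equal. apply proof_irrelevance.
  - now apply eRees_neq0 in E.
  - symmetry in E. now apply eRees_neq0 in E.
  - reflexivity.
Qed.

Lemma phi_onto y : rcomp e y -> exists x, phi x = y.
Proof.
  rewrite rees_componentP.
  intros [->|[c [d [s [hs [-> Hy]]]]]]; [now exists None|].
  exists (Some (exist _ s hs, d)). simpl. f_equal.
  apply (f_equal (op c)) in Hy. rewrite (mulg1 HG) in Hy.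
  rewrite <- Hy. now gsimpl.
Qed.

End GradedRees.

Theorem proposition3p7 (G : Type) (op : G -> G -> G) (e : G) (inv : G -> G)
  (S : Type) (mul : S -> S -> S) (z : S) (deg : S -> G)
  (HG : is_group op e inv) (HS : sg0 mul z) (Hdeg : graded mul z op deg)
  (Hlu : has_local_units mul) :
  (* (1) *)
  (forall x : SGam G S z, idempotent (rees_mul mul z) x <->
     exists (u : S) (a : G), idempotent mul u /\ x = eRees z a a u) /\
  (* (2) *)
  has_local_units (rees_mul (G:=G) mul z) /\
  (* (3) *)
  strongly_graded (rees_mul mul z) None op (rees_deg op e inv deg z) /\
  (* (4) phi : S # Gamma -> (S_Gamma)_e is a semigroup isomorphism *)
  ((forall x : Smash G S z, component None (rees_deg op e inv deg z) e (phi z op deg x)) /\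
   (forall x y : Smash G S z,
      phi z op deg (smash_mul mul z op inv deg x y)
      = rees_mul mul z (phi z op deg x) (phi z op deg y)) /\
   (forall x y : Smash G S z, phi z op deg x = phi z op deg y -> x = y) /\
   (forall y : SGam G S z, component None (rees_deg op e inv deg z) e y ->
      exists x : Smash G S z, phi z op deg x = y)) /\
  (* (5) *)
  (inverse_semigroup mul <-> inverse_semigroup (rees_mul (G:=G) mul z)).
Proof.
  split; [|split; [|split; [|split]]].
  - exact (rees_idempotentP HS e).
  - now apply rees_local_units.
  - now apply rees_strongly_graded.
  - repeat split.
    + exact (phi_component1 HG).
    + exact (phi_mul HG HS Hdeg).
    + exact phi_inj.
    + exact (phi_onto HG).
  - split; [apply (inverse_semigroup_rees HS)|apply (inverse_semigroup_of_rees HS e)].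
Qed.
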